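(* Let $\Theta=\{1,2\}$, let $P_1,\dots,P_m$ be experiments, and let $(A_1,u_1),\dots,(A_k,u_k)$ be decision problems with $|A_\ell|=2$ for every $\ell$. Then $$V\Big(P_1,\dots,P_m;\bigoplus_{\ell=1}^k(A_\ell,u_\ell)\Big)=\sum_{\ell=1}^k\max_{j=1,\dots,m}V(P_j;(A_\ell,u_\ell)).$$ Moreover, if for each $\ell$ the strategy $\sigma_\ell:\mathbf Y\to\Delta(A_\ell)$ is robustly optimal for $(A_\ell,u_\ell)$ (given $P_1,\dots,P_m$), then the strategy $\sigma:\mathbf Y\to\Delta(A_1\times\cdots\times A_k)$ defined by $\sigma(\mathbf y)=(\sigma_\ell(\mathbf y))_{\ell=1}^k$ (the product of the independent mixtures $\sigma_\ell(\mathbf y)$) is robustly optimal for $\bigoplus_{\ell=1}^k(A_\ell,u_\ell)$.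
   Context: $\Theta$ is a finite set of states. A decision problem is a pair $(A,u)$ with $A$ a finite nonempty action set and $u:\Theta\times A\to\mathbb{R}$; for $\alpha\in\Delta(A)$ write $u(\theta,\alpha)=\sum_a\alpha(a)u(\theta,a)$. An experiment is a map $P:\Theta\to\Delta(Y)$ with $Y$ a finite signal set. Given experiments $P_j:\Theta\to\Delta(Y_j)$, $j=1,\dots,m$, let $\mathbf Y=Y_1\times\cdots\times Y_m$ and let $\mathcal P(P_1,\dots,P_m)$ be the set of experiments $P:\Theta\to\Delta(\mathbf Y)$ whose $j$-th marginal is $P_j(\cdot|\theta)$ for every $\theta$ and $j$. A strategy is a map $\sigma:\mathbf Y\to\Delta(A)$. Define $V(P_1,\dots,P_m;(A,u))=\max_{\sigma}\min_{P\in\mathcal P(P_1,\dots,P_m)}\sum_{\theta}\sum_{\mathbf y\in\mathbf Y}P(\mathbf y|\theta)u(\theta,\sigma(\mathbf y))$, and call a maximizing $\sigma$ robustly optimal for $(A,u)$; for $m=1$, $V(P;(A,u))=\max_{\sigma:Y\to\Delta(A)}\sum_\theta\sum_y P(y|\theta)u(\theta,\sigma(y))$. The composition $\bigoplus_{\ell=1}^k(A_\ell,u_\ell)$ of decision problems is the decision problem with action set $A_1\times\cdots\times A_k$ and utility $u(\theta,(a_1,\dots,a_k))=\sum_{\ell=1}^k u_\ell(\theta,a_\ell)$. *)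

From mathcomp Require Import all_boot all_order all_algebra.
From mathcomp Require Import classical_sets reals.
Set Implicit Arguments.
Unset Strict Implicit.
Unset Printing Implicit Defensive.
Import Order.TTheory GRing.Theory Num.Theory.
Local Open Scope ring_scope.
Local Open Scope classical_set_scope.

(* The state space Theta = {1,2} is represented by bool. *)

Section Defs.
Variable R : realType.

Definition is_dist (T : finType) (p : T -> R) : Prop :=
  (forall t, 0 <= p t) /\ \sum_(t : T) p t = 1.

Definition experiment (Y : finType) (P : bool -> Y -> R) : Prop :=
  forall th, is_dist (P th).

Definition signals (m : nat) (Y : 'I_m -> finType) : finType :=
  {dffun forall j : 'I_m, Y j}.

Definition strategy (Ys A : finType) (sg : Ys -> A -> R) : Prop :=
  forall y, is_dist (sg y).

Definition mixed_util (A : finType) (u : bool -> A -> R) (th : bool) (al : A -> R) : R :=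
  \sum_(a : A) al a * u th a.

Definition payoff (Ys A : finType) (Q : bool -> Ys -> R) (u : bool -> A -> R)
  (sg : Ys -> A -> R) : R :=
  \sum_(th : bool) \sum_(y : Ys) Q th y * mixed_util u th (sg y).

Definition coupling (m : nat) (Y : 'I_m -> finType) (P : forall j, bool -> Y j -> R)
  (Q : bool -> signals Y -> R) : Prop :=
  experiment Q /\
  forall (th : bool) (j : 'I_m) (yj : Y j),
    \sum_(y : signals Y | y j == yj) Q th y = P j th yj.

Definition worst (m : nat) (Y : 'I_m -> finType) (P : forall j, bool -> Y j -> R)
  (A : finType) (u : bool -> A -> R) (sg : signals Y -> A -> R) : R :=
  inf [set x | exists Q, coupling P Q /\ x = payoff Q u sg].

Definition Vrob (m : nat) (Y : 'I_m -> finType) (P : forall j, bool -> Y j -> R)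
  (A : finType) (u : bool -> A -> R) : R :=
  sup [set x | exists sg, strategy sg /\ x = worst P u sg].

Definition V1 (Y : finType) (P : bool -> Y -> R) (A : finType) (u : bool -> A -> R) : R :=
  sup [set x | exists sg : Y -> A -> R, strategy sg /\ x = payoff P u sg].

Definition robustly_optimal (m : nat) (Y : 'I_m -> finType) (P : forall j, bool -> Y j -> R)
  (A : finType) (u : bool -> A -> R) (sg : signals Y -> A -> R) : Prop :=
  strategy sg /\
  forall sg', strategy sg' -> worst P u sg' <= worst P u sg.

Definition comp_actions (k : nat) (A : 'I_k -> finType) : finType :=
  {dffun forall l : 'I_k, A l}.

Definition comp_util (k : nat) (A : 'I_k -> finType) (u : forall l, bool -> A l -> R)
  (th : bool) (a : comp_actions A) : R :=
  \sum_(l : 'I_k) u l th (a l).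

Definition prod_strategy (Ys : finType) (k : nat) (A : 'I_k -> finType)
  (sg : forall l, Ys -> A l -> R) (y : Ys) (a : comp_actions A) : R :=
  \prod_(l : 'I_k) sg l y (a l).

End Defs.

From mathcomp Require Import all_boot all_order all_algebra.
From mathcomp Require Import classical_sets reals boolp.
From mathcomp Require Import ring lra.
Import Order.TTheory GRing.Theory Num.Theory.
Local Open Scope ring_scope.
Set Implicit Arguments.
Unset Strict Implicit.

(* With two states, signal y of an experiment has weight w(y) = P(1,y) + P(2,y) and
   posterior x(y) = P(1,y) / w(y); the experiment becomes a measure of mass 2 and
   mean 1 on beliefs in [0,1].  The value of a two-action problem against such a
   measure nu is sum_x nu(x) val2(x, 1-x), and val2 is affine plus one kink (x-c)^+;
   so it only depends on the mass, the mean and the call function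
   C_nu(c) = sum_x nu(x) (x-c)^+ of nu at the kink c.

   On a finite grid S of beliefs, a measure whose call function lies
      below a convex T and touches it at the ends of S can be carried by a martingale
      kernel to a measure whose call function is T on S.  Call functions and mass
      determine measures on S.
   2. Universal coupling.  On a grid containing all posteriors and kinks, spread every
      experiment up to the envelope max_j C_{nu_j}: all spreads are one measure mu*.
      Drawing x from mu*, the state from x and the signals independently from the
      Bayes inverses of the spreads couples P_1, ..., P_m, and for every two-action
      problem with a listed kink the coupling is worth at most sum mu* val2, which is
      the value of one of the experiments.
   3. Composition.  Payoffs of independent mixtures add up across components,
      following the best single experiment guarantees its value against every
      coupling, and the universal coupling caps every strategy of the composition. *)

Section PositivePart.
Variable R : realFieldType.

Definition posp (x : R) : R := Num.max x 0.

Lemma posp_id x : 0 <= x -> posp x = x.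
Proof. exact: max_l. Qed.

Lemma posp_eq0 x : x <= 0 -> posp x = 0.
Proof. exact: max_r. Qed.

Lemma posp_scale l x : 0 <= l -> posp (l * x) = l * posp x.
Proof. by move=> l0; rewrite /posp maxr_pMr // mulr0. Qed.

Lemma max_posp u v : Num.max u v = v + posp (u - v).
Proof.
case: (leP u v) => [uv|vu]; first by rewrite posp_eq0 ?addr0 // subr_le0.
by rewrite posp_id ?subrKC // subr_ge0 ltW.
Qed.

Lemma posp_chord x a r b : a < r -> r < b ->
  posp (x - r) * (b - a) <= (b - r) * posp (x - a) + (r - a) * posp (x - b).
Proof.
move=> ar rb; rewrite /posp.
case: (leP (x - r) 0) => hr; case: (leP (x - a) 0) => ha;
  case: (leP (x - b) 0) => hb; nra.
Qed.

End PositivePart.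

Lemma seq_argmax (R : realFieldType) (T : eqType) (s : seq T) (P : pred T) (F : T -> R) :
  has P s -> exists x, [/\ x \in s, P x & {in s, forall y, P y -> F y <= F x}].
Proof.
elim: s => //= y s IH hP.
case: (boolP (has P s)) => [/IH [z [zs Pz Hz]]|hn].
  case: (boolP (P y && (F z < F y))) => [/andP[Py zy]|hyz].
    exists y; split; rewrite ?mem_head // => x; rewrite inE => /predU1P[->//|xs Px].
    exact: le_trans (Hz x xs Px) (ltW zy).
  exists z; split; rewrite ?inE ?zs ?orbT // => x; rewrite inE => /predU1P[-> Py|]; last exact: Hz.
  by move: hyz; rewrite Py /= -leNgt.
have Py : P y by move: hP; rewrite (negbTE hn) orbF.
exists y; split; rewrite ?mem_head // => x; rewrite inE => /predU1P[->//|xs Px].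
by move/hasPn: hn => /(_ x xs); rewrite Px.
Qed.

Lemma count_lt_sub (T : eqType) (s : seq T) (p q : pred T) x :
  {in s, subpred p q} -> x \in s -> q x -> ~~ p x -> (count p s < count q s)%N.
Proof.
move=> sub_pq xs qx px.
have -> : count p s = count (predI p q) s.
  by apply: eq_in_count => z zs /=; case pz: (p z); rewrite ?(sub_pq z zs pz).
have := count_predC p (filter q s); rewrite size_filter !count_filter => <-.
rewrite -[X in (X < _)%N]addn0 ltn_add2l -has_count.
by apply/hasP; exists x => //=; rewrite px qx.
Qed.

Section GridMeasures.
Variable R : realFieldType.
Variable S : seq R.
Hypothesis uS : uniq S.
Implicit Types (mu nu : R -> R) (K : R -> R -> R).

(* A measure on the grid S is a weight function mu; its call function is
   C_mu(c) = sum_x mu(x) (x - c)^+. *)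
Definition call mu c : R := \sum_(x <- S) mu x * posp (x - c).

Definition kpush mu K x' : R := \sum_(x <- S) mu x * K x x'.
Definition kcomp K1 K2 x x'' : R := \sum_(x' <- S) K1 x x' * K2 x' x''.

Definition dirac (x x' : R) : R := (x == x')%:R.

Definition mkernel K : Prop :=
  [/\ {in S &, forall x x', 0 <= K x x'},
      {in S, forall x, \sum_(x' <- S) K x x' = 1} &
      {in S, forall x, \sum_(x' <- S) K x x' * x' = x}].

Lemma sum_dirac x (f : R -> R) : x \in S -> \sum_(x' <- S) dirac x x' * f x' = f x.
Proof.
move=> xS; rewrite (bigD1_seq x) //= /dirac eqxx mul1r big1 ?addr0 // => y.
by rewrite eq_sym => /negbTE ->; rewrite mul0r.
Qed.

Lemma kpush_dirac mu : {in S, kpush mu dirac =1 mu}.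
Proof.
move=> x xS; rewrite /kpush -[RHS](sum_dirac mu xS); apply: eq_bigr => y _.
by rewrite /dirac eq_sym mulrC.
Qed.

Lemma mkernel_dirac : mkernel dirac.
Proof.
split=> [x x' _ _|x xS|x xS]; last exact: sum_dirac.
  by rewrite /dirac; case: (x == x').
by rewrite -[RHS](sum_dirac (fun=> 1) xS); apply: eq_bigr => y _; rewrite mulr1.
Qed.

Lemma kpush_comp mu K1 K2 : kpush mu (kcomp K1 K2) =1 kpush (kpush mu K1) K2.
Proof.
move=> x''; rewrite /kpush /kcomp; under eq_bigr do rewrite mulr_sumr.
rewrite exchange_big /=; apply: eq_bigr => x' _; rewrite mulr_suml.
by apply: eq_bigr => x _; rewrite mulrA.
Qed.

Lemma mkernel_comp K1 K2 : mkernel K1 -> mkernel K2 -> mkernel (kcomp K1 K2).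
Proof.
move=> [K1_ge0 K1_row K1_mean] [K2_ge0 K2_row K2_mean]; split.
- move=> x x'' xS x''S; rewrite /kcomp big_seq; apply: sumr_ge0 => x' x'S.
  by apply: mulr_ge0; [exact: K1_ge0|exact: K2_ge0].
- move=> x xS; rewrite /kcomp exchange_big /= -[RHS](K1_row x xS) big_seq [RHS]big_seq.
  by apply: eq_bigr => x' x'S; rewrite -mulr_sumr K2_row // mulr1.
- move=> x xS; rewrite -[RHS](K1_mean x xS); under eq_bigr do rewrite /kcomp mulr_suml.
  rewrite exchange_big /= big_seq [RHS]big_seq; apply: eq_bigr => x' x'S.
  by under eq_bigr do rewrite -mulrA; rewrite -mulr_sumr K2_mean.
Qed.

Lemma kpush_ge0 mu K : {in S, forall x, 0 <= mu x} -> {in S &, forall x x', 0 <= K x x'} ->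
  {in S, forall x', 0 <= kpush mu K x'}.
Proof.
move=> mu_ge0 K_ge0 x' x'S; rewrite /kpush big_seq; apply: sumr_ge0 => x xS.
by apply: mulr_ge0; [exact: mu_ge0|exact: K_ge0].
Qed.

Lemma kpush_mass mu K : mkernel K -> \sum_(x <- S) kpush mu K x = \sum_(x <- S) mu x.
Proof.
case=> _ K_row _; rewrite /kpush exchange_big /= big_seq [RHS]big_seq.
by apply: eq_bigr => x xS; rewrite -mulr_sumr K_row // mulr1.
Qed.

Lemma kpush_mean mu K : mkernel K ->
  \sum_(x <- S) kpush mu K x * x = \sum_(x <- S) mu x * x.
Proof.
case=> _ _ K_mean; under eq_bigr do rewrite /kpush mulr_suml.
rewrite exchange_big /= big_seq [RHS]big_seq; apply: eq_bigr => x xS.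
by under eq_bigr do rewrite -mulrA; rewrite -mulr_sumr K_mean.
Qed.

Lemma call_kpush mu K c :
  call (kpush mu K) c = \sum_(x <- S) mu x * \sum_(x' <- S) K x x' * posp (x' - c).
Proof.
rewrite /call /kpush; under eq_bigr do rewrite big_distrl /=.
rewrite exchange_big /=; apply: eq_bigr => x _; rewrite big_distrr /=.
by apply: eq_bigr => x' _; rewrite mulrA.
Qed.

Lemma eq_in_call mu nu : {in S, mu =1 nu} -> call mu =1 call nu.
Proof. by move=> e c; rewrite /call big_seq [RHS]big_seq; apply: eq_bigr => x /e ->. Qed.

Lemma call_convex mu a r b : {in S, forall x, 0 <= mu x} -> a < r -> r < b ->
  call mu r * (b - a) <= (b - r) * call mu a + (r - a) * call mu b.
Proof.
move=> mu_ge0 ar rb; rewrite /call mulr_suml !mulr_sumr -big_split /= big_seq [leRHS]big_seq.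
apply: ler_sum => x xS; rewrite -mulrA.
rewrite [leRHS](_ : _ = mu x * ((b - r) * posp (x - a) + (r - a) * posp (x - b))); last by ring.
by apply: ler_wpM2l; [exact: mu_ge0|exact: posp_chord].
Qed.

Lemma call_below mu c : {in S, forall x, c <= x} ->
  call mu c = \sum_(x <- S) mu x * x - c * \sum_(x <- S) mu x.
Proof.
move=> c_le; rewrite /call mulr_sumr -sumrB big_seq [RHS]big_seq.
by apply: eq_bigr => x xS; rewrite posp_id ?subr_ge0 ?c_le //; ring.
Qed.

Lemma call_above mu c : {in S, forall x, x <= c} -> call mu c = 0.
Proof.
by move=> le_c; rewrite /call big_seq big1 // => x xS; rewrite posp_eq0 ?mulr0 // subr_le0 le_c.
Qed.

Lemma call_inj mu nu : \sum_(x <- S) mu x = \sum_(x <- S) nu x ->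
  {in S, call mu =1 call nu} -> {in S, mu =1 nu}.
Proof.
move=> e_mass e_call; pose h x := mu x - nu x.
have h_call s : s \in S -> \sum_(x <- S) h x * posp (x - s) = 0.
  by move=> sS; under eq_bigr do rewrite mulrBl; rewrite sumrB -!/(call _ s) e_call ?subrr.
have h_mass : \sum_(x <- S) h x = 0 by rewrite sumrB e_mass subrr.
move=> x0 x0S; apply/eqP; rewrite -subr_eq0; apply/negPn/negP => h0.
(* h has zero mass and zero calls on S; its largest nonzero point xs is detected by
   the call at the previous grid point, or by the mass if there is none. *)
have [xs [xsS hxs xs_max]] : exists xs,
    [/\ xs \in S, h xs != 0 & {in S, forall y, h y != 0 -> y <= xs}].
  by apply: seq_argmax; apply/hasP; exists x0.
have below y : y \in S -> y != xs -> h y != 0 -> y < xs.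
  by move=> yS yxs hy; rewrite lt_neqAle yxs xs_max.
have h_others (F : R -> R) : {in S, forall y, y < xs -> F y = 0} ->
    \sum_(x <- S) h x * F x = h xs * F xs.
  move=> F0; rewrite (bigD1_seq xs) //= big_seq_cond big1 ?addr0 // => y /andP[yS yxs].
  by have [->|hy] := eqVneq (h y) 0; rewrite ?mul0r // F0 ?mulr0 // below.
case: (boolP (has (fun t => t < xs) S)) => [has_below|no_below].
  have [s [sS sxs s_max]] := seq_argmax id has_below.
  move: (h_call s sS); rewrite (h_others (fun x => posp (x - s))); last first.
    by move=> y yS yxs; rewrite posp_eq0 // subr_le0 s_max.
  rewrite posp_id ?subr_ge0 ?ltW //; apply/eqP/mulf_neq0; first exact: hxs.
  by rewrite subr_eq0 gt_eqF.
move: h_mass; under eq_bigr do rewrite -[h _]mulr1.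
rewrite (h_others (fun=> 1)) ?mulr1 => [/eqP|y yS yxs]; first exact/negP.
by move/hasPn: no_below => /(_ y yS); rewrite yxs.
Qed.

End GridMeasures.

Section Sweep.
Variable R : realFieldType.
Variable S : seq R.
Hypothesis uS : uniq S.
Variables (a b t : R).
Hypotheses (aS : a \in S) (bS : b \in S).

(* The kernel sweeping a fraction t of the mass lying strictly between a and b
   out to the endpoints a and b, in the proportions that keep every mean fixed. *)
Definition sweep x x' : R :=
  if (a < x) && (x < b) then
    (1 - t) * dirac x x' + t * (b - x) / (b - a) * dirac a x' + t * (x - a) / (b - a) * dirac b x'
  else dirac x x'.

Lemma sum_sweep x (g : R -> R) : x \in S ->
  \sum_(x' <- S) sweep x x' * g x' =
  if (a < x) && (x < b) then (1 - t) * g x + t * (b - x) / (b - a) * g a + t * (x - a) / (b - a) * g b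
  else g x.
Proof.
move=> xS; rewrite /sweep; case: ifP => _; last exact: sum_dirac.
rewrite -(sum_dirac uS g xS) -(sum_dirac uS g aS) -(sum_dirac uS g bS) !mulr_sumr -!big_split /=.
by apply: eq_bigr => y _; ring.
Qed.

Lemma mkernel_sweep : 0 <= t <= 1 -> mkernel S sweep.
Proof.
move=> /andP[t0 t1]; split => [x x' _ _|x xS|x xS].
- rewrite /sweep /dirac; case: ifP => [/andP[ax xb]|_]; last by case: (x == x').
  have wa : 0 <= t * (b - x) / (b - a) by apply: divr_ge0; [apply: mulr_ge0; lra|lra].
  have wb : 0 <= t * (x - a) / (b - a) by apply: divr_ge0; [apply: mulr_ge0; lra|lra].
  by case: (x == x'); case: (a == x'); case: (b == x'); rewrite /= ?mulr1 ?mulr0; lra.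
- have := sum_sweep (fun=> 1) xS; under eq_bigr do rewrite mulr1.
  by move=> ->; case: ifP => // /andP[ax xb]; field; lra.
- by rewrite (sum_sweep id xS); case: ifP => // /andP[ax xb]; field; lra.
Qed.

Lemma sweep_posp_out x r : x \in S -> r <= a \/ b <= r ->
  \sum_(x' <- S) sweep x x' * posp (x' - r) = posp (x - r).
Proof.
move=> xS hr; rewrite sum_sweep //; case: ifP => // /andP[ax xb].
case: hr => hr; first by rewrite !posp_id; [field|..]; lra.
by rewrite !posp_eq0; [field|..]; lra.
Qed.

Lemma sweep_posp_in x r : x \in S -> a < r -> r < b ->
  \sum_(x' <- S) sweep x x' * posp (x' - r) =
  posp (x - r) + t * (((b - r) * posp (x - a) + (r - a) * posp (x - b)) / (b - a) - posp (x - r)).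
Proof.
move=> xS ar rb; rewrite sum_sweep //; case: ifP => [/andP[ax xb]|/negbT].
  rewrite (@posp_eq0 _ (a - r)) ?(@posp_id _ (b - r)) ?(@posp_id _ (x - a)) ?(@posp_eq0 _ (x - b));
    [field|..]; lra.
rewrite negb_and -!leNgt => /orP[xa|bx].
  by rewrite (@posp_eq0 _ (x - a)) ?(@posp_eq0 _ (x - b)) ?(@posp_eq0 _ (x - r)); [field|..]; lra.
by rewrite (@posp_id _ (x - a)) ?(@posp_id _ (x - b)) ?(@posp_id _ (x - r)); [field|..]; lra.
Qed.

Lemma call_sweep_out mu r : r <= a \/ b <= r -> call S (kpush S mu sweep) r = call S mu r.
Proof.
move=> hr; rewrite call_kpush /call big_seq [RHS]big_seq.
by apply: eq_bigr => x xS; rewrite sweep_posp_out.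
Qed.

Definition call_chord mu r : R := ((b - r) * call S mu a + (r - a) * call S mu b) / (b - a).

Lemma call_sweep_in mu r : a < r -> r < b ->
  call S (kpush S mu sweep) r = call S mu r + t * (call_chord mu r - call S mu r).
Proof.
move=> ar rb; rewrite call_kpush big_seq.
under eq_bigr => x xS do rewrite sweep_posp_in // mulrDr.
rewrite -big_seq big_split /=; congr (_ + _).
under eq_bigr do rewrite mulrCA.
rewrite -mulr_sumr; congr (_ * _); rewrite /call_chord /call !mulr_sumr -big_split /= mulr_suml -sumrB.
by apply: eq_bigr => x _; field; lra.
Qed.

End Sweep.

(* Spreading a measure up to a convex majorant of its call function. *)
Section Balayage.
Variable R : realFieldType.
Variable S : seq R.
Hypothesis uS : uniq S.
Variable T : R -> R.

Definition grid_convex : Prop := forall a r b, a \in S -> r \in S -> b \in S -> a < r -> r < b ->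
  T r * (b - a) <= (b - r) * T a + (r - a) * T b.

Definition below_pinned mu : Prop :=
  [/\ {in S, forall x, 0 <= mu x}, {in S, forall r, call S mu r <= T r},
      exists2 s0, s0 \in S & {in S, forall x, s0 <= x} /\ call S mu s0 = T s0 &
      exists2 s1, s1 \in S & {in S, forall x, x <= s1} /\ call S mu s1 = T s1].

Definition gap mu : nat := count (fun r => call S mu r < T r) S.

Hypothesis convexT : grid_convex.

Lemma gap_bracket mu s : below_pinned mu -> s \in S -> call S mu s < T s ->
  exists a b, [/\ a \in S, b \in S, a < s < b, call S mu a = T a /\ call S mu b = T b &
    {in S, forall r, a < r -> r < b -> call S mu r < T r}].
Proof.
move=> [_ below [s0 s0S [s0_min C_s0]] [s1 s1S [s1_max C_s1]]] sS gap_s.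
have s_ne t : call S mu t = T t -> s != t.
  by move=> C_t; apply/eqP => st; move: gap_s; rewrite st C_t ltxx.
have s0s : s0 < s by rewrite lt_neqAle s0_min // eq_sym s_ne.
have ss1 : s < s1 by rewrite lt_neqAle s1_max // s_ne.
have [a [aS /andP[as_ /eqP C_a] a_max]] := @seq_argmax R _ S
    (fun t => (t < s) && (call S mu t == T t)) id
    (introT hasP (ex_intro2 _ _ s0 s0S (introT andP (conj s0s (introT eqP C_s0))))).
have [b [bS /andP[sb /eqP C_b] b_min]] := @seq_argmax R _ S
    (fun t => (s < t) && (call S mu t == T t)) -%R
    (introT hasP (ex_intro2 _ _ s1 s1S (introT andP (conj ss1 (introT eqP C_s1))))).
exists a, b; split => //; first by rewrite as_.
move=> r rS ar rb; rewrite lt_neqAle below // andbT; apply/eqP => C_r.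
case: (ltgtP r s) => [rs|sr|rs].
- by move: (a_max r rS); rewrite rs C_r eqxx leNgt ar => /(_ isT).
- by move: (b_min r rS); rewrite sr C_r eqxx lerN2 leNgt rb => /(_ isT).
- by move: gap_s; rewrite -rs C_r ltxx.
Qed.

Lemma sweep_fill mu a b s : {in S, forall x, 0 <= mu x} -> {in S, forall r, call S mu r <= T r} ->
  a \in S -> b \in S -> s \in S -> a < s < b -> call S mu a = T a -> call S mu b = T b ->
  {in S, forall r, a < r -> r < b -> call S mu r < T r} ->
  exists t r0, [/\ 0 <= t <= 1, r0 \in S, a < r0 < b,
    call S (kpush S mu (sweep a b t)) r0 = T r0 &
    {in S, forall r, call S (kpush S mu (sweep a b t)) r <= T r}].
Proof.
move=> mu_ge0 below aS bS sS /andP[as_ sb] C_a C_b inside.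
have ab : a < b := lt_trans as_ sb.
set C := call S mu in below C_a C_b inside *.
pose chord := call_chord S a b mu.
have T_chord r : r \in S -> a < r -> r < b -> T r <= chord r.
  by move=> rS ar rb; rewrite /chord /call_chord -/C C_a C_b ler_pdivlMr ?subr_gt0 //; apply: convexT.
pose ratio r := (T r - C r) / (chord r - C r).
have ratio_spec r : r \in S -> a < r -> r < b ->
    [/\ 0 < ratio r, ratio r <= 1 & ratio r * (chord r - C r) = T r - C r].
  move=> rS ar rb; have := inside r rS ar rb; have := T_chord r rS ar rb => h1 h2.
  have pos : 0 < chord r - C r by lra.
  rewrite /ratio; split; first by apply: divr_gt0; lra.
    by rewrite ler_pdivrMr // mul1r; lra.
  by rewrite divfK // gt_eqF.
have [r0 [r0S /andP[ar0 r0b] r0_min]] := @seq_argmax R _ S (fun r => (a < r) && (r < b))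
    (fun r => - ratio r) (introT hasP (ex_intro2 _ _ s sS (introT andP (conj as_ sb)))).
have [t0 t1 t_eq] := ratio_spec r0 r0S ar0 r0b.
exists (ratio r0), r0; split => //; [by rewrite ltW|by rewrite ar0|..].
  by rewrite call_sweep_in // -/C -/chord t_eq; ring.
move=> r rS; case: (boolP ((a < r) && (r < b))) => [/andP[ar rb]|].
  have [_ _ r_eq] := ratio_spec r rS ar rb.
  have le_ratio : ratio r0 <= ratio r by rewrite -lerN2 r0_min ?ar.
  have := T_chord r rS ar rb; have := inside r rS ar rb => h1 h2.
  rewrite call_sweep_in // -/C -/chord.
  have : ratio r0 * (chord r - C r) <= ratio r * (chord r - C r) by apply: ler_wpM2r; lra.
  lra.
rewrite negb_and -!leNgt => hr; rewrite call_sweep_out ?below //.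
by case/orP: hr; [left|right].
Qed.

Lemma balayage_step mu s : below_pinned mu -> s \in S -> call S mu s < T s ->
  exists K, [/\ mkernel S K, below_pinned (kpush S mu K) & (gap (kpush S mu K) < gap mu)%N].
Proof.
move=> inv sS gap_s; have [mu_ge0 below [s0 s0S [s0_min C_s0]] [s1 s1S [s1_max C_s1]]] := inv.
have [a [b [aS bS asb [C_a C_b] inside]]] := gap_bracket inv sS gap_s.
have ab : a < b by case/andP: asb => as_ sb; apply: lt_trans as_ sb.
have [t [r0 [t01 r0S /andP[ar0 r0b] C'_r0 below']]] :=
  sweep_fill mu_ge0 below aS bS sS asb C_a C_b inside.
have Kt := mkernel_sweep uS aS bS t01; have [K_ge0 _ _] := Kt.
have outside r : r <= a \/ b <= r -> call S (kpush S mu (sweep a b t)) r = call S mu r.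
  by move=> hr; apply: (call_sweep_out uS t aS bS mu hr).
exists (sweep a b t); split => //.
  split => //; first exact: kpush_ge0 mu_ge0 K_ge0.
    by exists s0 => //; rewrite outside ?C_s0 //; left; apply: s0_min.
  by exists s1 => //; rewrite outside ?C_s1 //; right; apply: s1_max.
apply: (@count_lt_sub _ _ _ _ r0) => //=; last by rewrite C'_r0 ltxx.
  move=> r rS /=; case: (boolP ((a < r) && (r < b))) => [/andP[ar rb] _|]; first exact: inside.
  by rewrite negb_and -!leNgt => hr; rewrite outside //; case/orP: hr; [left|right].
exact: inside.
Qed.

Theorem balayage mu : below_pinned mu ->
  exists K, mkernel S K /\ {in S, forall r, call S (kpush S mu K) r = T r}.
Proof.
have [n] := ubnP (gap mu); elim: n mu => // n IH mu gap_lt inv.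
case: (boolP (has (fun r => call S mu r < T r) S)) => [/hasP[s sS gap_s]|no_gap].
  have [K1 [K1_mk inv1 gap1]] := balayage_step inv sS gap_s.
  have [K2 [K2_mk C2]] := IH _ (leq_trans gap1 gap_lt) inv1.
  exists (kcomp S K1 K2); split; first exact: mkernel_comp.
  by move=> r rS; rewrite -C2 //; apply: eq_in_call => x _; apply: kpush_comp.
exists (dirac (R:=R)); split; first exact: mkernel_dirac.
move=> r rS; rewrite (eq_in_call (kpush_dirac uS mu)); have [_ below _ _] := inv.
apply/eqP; rewrite eq_le below //= leNgt; apply/negP => gap_r.
by case/hasP: no_gap; exists r.
Qed.

End Balayage.

Section DependentProducts.
Variable R : comNzRingType.
Variables (I : finType) (Y : I -> finType).

Lemma sum_dffun_prod (F : forall i, Y i -> R) :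
  \sum_(y : {dffun forall i, Y i}) \prod_i F i (y i) = \prod_i \sum_(z : Y i) F i z.
Proof.
pose J := {i : I & Y i}; pose Fs (t : J) := F (tag t) (tagged t).
have tagged_sum i : \sum_(z : Y i) F i z = \sum_(t : J | tag t == i) Fs t.
  transitivity (\sum_(i' | i' == i) \sum_(z : Y i') F i' z); first by rewrite big_pred1_eq.
  by rewrite (sig_big_dep (pred1 i) (fun i' (z : Y i') => true) F); apply: eq_bigl => t; rewrite andbT.
under [RHS]eq_bigr do rewrite tagged_sum.
rewrite (bigA_distr_big_dep (fun i (t : J) => tag t == i) (fun i t => Fs t)) [RHS]big_sub.
pose to_family (y : {dffun forall i, Y i}) := to_family_tagged_with (fprod_of_dffun y).
have bij_to_family : bijective to_family.
  exists (fun g => dffun_of_fprod (of_family_tagged_with g)) => y.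
    by rewrite /to_family to_family_tagged_withK fprod_of_dffunK.
  by rewrite /to_family dffun_of_fprodK of_family_tagged_withK.
rewrite [RHS](reindex to_family); last exact: onW_bij.
by apply: eq_bigr => y _; apply: eq_bigr => i _; rewrite /to_family /= ffunE.
Qed.

Lemma sum_dffun_prod_fix (F : forall i, Y i -> R) j (yj : Y j) :
  \sum_(y : {dffun forall i, Y i} | y j == yj) \prod_i F i (y i) =
  F j yj * \prod_(i | i != j) \sum_(z : Y i) F i z.
Proof.
pose ind i (z : Y i) : R := if Tagged Y z == Tagged Y yj then 1 else 0.
pose F' i z := F i z * (if i == j then ind i z else 1).
have restrict (y : {dffun forall i, Y i}) :
    \prod_i F' i (y i) = (if y j == yj then 1 else 0) * \prod_i F i (y i).
  rewrite /F' big_split /= [X in _ * X](bigD1 j) //= eqxx.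
  rewrite [X in _ * (_ * X)]big1 => [|i /negbTE ->] //.
  by rewrite mulr1 /ind eq_Tagged /= mulrC.
rewrite big_mkcond /=; transitivity (\sum_(y : {dffun forall i, Y i}) \prod_i F' i (y i)).
  by apply: eq_bigr => y _; rewrite restrict; case: ifP; rewrite ?mul1r ?mul0r.
rewrite sum_dffun_prod (bigD1 j) //=; congr (_ * _).
  rewrite /F' eqxx (bigD1 yj) //= /ind eqxx mulr1 big1 ?addr0 // => z zn.
  by rewrite eq_Tagged /= (negbTE zn) mulr0.
by apply: eq_bigr => i ij; rewrite /F' (negbTE ij); under eq_bigr do rewrite mulr1.
Qed.

End DependentProducts.

Section Extrema.
Variable R : realType.

Lemma sup_max (E : set R) M : E M -> (forall x, E x -> x <= M) -> sup E = M.
Proof.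
move=> EM M_ub; apply/eqP; rewrite eq_le; apply/andP; split.
  by apply: ge_sup; [exists M|move=> x /M_ub].
by apply: ub_le_sup => //; exists M => x /M_ub.
Qed.

Lemma inf_min (E : set R) M : E M -> (forall x, E x -> M <= x) -> inf E = M.
Proof.
move=> EM M_lb; apply/eqP; rewrite eq_le; apply/andP; split; last first.
  by apply: lb_le_inf; [exists M|move=> x /M_lb].
by apply: ge_inf => //; exists M => x /M_lb.
Qed.

Definition maxf (A : finType) (a0 : A) (f : A -> R) : R := f [arg max_(a > a0) f a]%O.

Lemma maxf_ge (A : finType) (a0 : A) (f : A -> R) a : f a <= maxf a0 f.
Proof. by rewrite /maxf; case: arg_maxP => // b _; apply. Qed.

End Extrema.

Section SingleExperiment.
Variable R : realType.
Variables (Ys A : finType) (a0 : A) (u : bool -> A -> R).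
Implicit Types (Q : bool -> Ys -> R) (sg : Ys -> A -> R).

Definition joint_util Q y a : R := \sum_th Q th y * u th a.

Definition bayes_value Q : R := \sum_(y : Ys) maxf a0 (joint_util Q y).

Lemma payoffE Q sg : payoff Q u sg = \sum_(y : Ys) \sum_(a : A) sg y a * joint_util Q y a.
Proof.
rewrite /payoff /mixed_util exchange_big /=; apply: eq_bigr => y _.
under eq_bigr do rewrite mulr_sumr.
rewrite exchange_big /=; apply: eq_bigr => a _.
by rewrite mulr_sumr; apply: eq_bigr => th _; ring.
Qed.

Lemma payoff_le_bayes Q sg : strategy sg -> payoff Q u sg <= bayes_value Q.
Proof.
move=> sg_dist; rewrite payoffE; apply: ler_sum => y _; have [sg_ge0 sg_sum] := sg_dist y.
rewrite -[leRHS]mul1r -sg_sum mulr_suml.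
by apply: ler_sum => a _; apply: ler_wpM2l => //; apply: maxf_ge.
Qed.

Definition pure (f : Ys -> A) y a : R := if a == f y then 1 else 0.

Lemma strategy_pure f : strategy (pure f).
Proof.
move=> y; split=> [a|]; first by rewrite /pure; case: ifP.
by rewrite /pure -big_mkcond big_pred1_eq.
Qed.

Definition best_response Q y : A := [arg max_(a > a0) joint_util Q y a]%O.

Lemma bayes_attained Q : payoff Q u (pure (best_response Q)) = bayes_value Q.
Proof.
rewrite payoffE; apply: eq_bigr => y _; rewrite (bigD1 (best_response Q y)) //=.
by rewrite /pure eqxx mul1r big1 ?addr0 // => a /negbTE ->; rewrite mul0r.
Qed.

Lemma V1_bayes Q : V1 Q u = bayes_value Q.
Proof.
apply: sup_max.
  by exists (pure (best_response Q)); rewrite bayes_attained; split => //; apply: strategy_pure.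
by move=> x [sg [sg_dist ->]]; apply: payoff_le_bayes.
Qed.

Lemma mixed_util_ge th (al : A -> R) : is_dist al ->
  - \sum_(a : A) `|u th a| <= mixed_util u th al.
Proof.
case=> al_ge0 al_sum; rewrite /mixed_util -sumrN; apply: ler_sum => a _.
have al1 : al a <= 1 by rewrite -al_sum (bigD1 a) //= lerDl sumr_ge0.
have := al_ge0 a; have := lerNnormlW (lexx `|u th a|); have := normr_ge0 (u th a); nra.
Qed.

Lemma payoff_ge Q sg : experiment Q -> strategy sg ->
  - \sum_th \sum_(a : A) `|u th a| <= payoff Q u sg.
Proof.
move=> Q_exp sg_dist; rewrite /payoff -sumrN; apply: ler_sum => th _.
have [Q_ge0 Q_sum] := Q_exp th.
rewrite -[X in - X]mul1r -mulrN -Q_sum mulr_suml; apply: ler_sum => y _.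
by apply: ler_wpM2l => //; apply: mixed_util_ge.
Qed.

End SingleExperiment.

Section RobustPayoffs.
Variable R : realType.
Variables (m : nat) (Y : 'I_m -> finType) (P : forall j : 'I_m, bool -> Y j -> R).
Variables (Act : finType) (v : bool -> Act -> R).
Arguments P : clear implicits.

Lemma worst_le sg Q : coupling P Q -> strategy sg -> worst P v sg <= payoff Q v sg.
Proof.
move=> Q_coup sg_dist; apply: ge_inf; last by exists Q.
exists (- \sum_th \sum_(a : Act) `|v th a|) => x [Q' [[Q'_exp _] ->]].
exact: payoff_ge.
Qed.

Lemma payoff_lift j (tau : Y j -> Act -> R) Q :
  coupling P Q -> payoff Q v (fun y : signals Y => tau (y j)) = payoff (P j) v tau.
Proof.
move=> [_ Q_marg]; rewrite /payoff; apply: eq_bigr => th _.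
rewrite (partition_big (fun y : signals Y => y j) predT) //=.
apply: eq_bigr => yj _; rewrite -(Q_marg th j yj) big_distrl /=.
by apply: eq_big => [y|y /eqP ->].
Qed.

Lemma worst_lift j (tau : Y j -> Act -> R) : (exists Q, coupling P Q) ->
  worst P v (fun y : signals Y => tau (y j)) = payoff (P j) v tau.
Proof.
move=> [Q Q_coup]; apply: inf_min; first by exists Q; rewrite payoff_lift.
by move=> x [Q' [Q'_coup ->]]; rewrite payoff_lift.
Qed.

End RobustPayoffs.

Section TwoActions.
Variable R : realFieldType.
Variables (A B C D : R).

Definition val2 (q1 q0 : R) : R := Num.max (q1 * A + q0 * B) (q1 * C + q0 * D).

(* The indifference belief between the two actions (meaningful when A - B - C + D != 0). *)
Definition kink : R := - (B - D) / (A - B - C + D).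

Lemma val2_hom l q1 q0 : 0 <= l -> val2 (l * q1) (l * q0) = l * val2 q1 q0.
Proof. by move=> l0; rewrite /val2 maxr_pMr // !mulrDr !mulrA. Qed.

Lemma val2_sum (X : eqType) (s : seq X) (lam q1 q0 : X -> R) :
  {in s, forall x, 0 <= lam x} ->
  val2 (\sum_(x <- s) lam x * q1 x) (\sum_(x <- s) lam x * q0 x) <=
  \sum_(x <- s) lam x * val2 (q1 x) (q0 x).
Proof.
move=> lam_ge0; rewrite /val2 ge_max !mulr_suml -!big_split /=.
apply/andP; split; rewrite big_seq [leRHS]big_seq; apply: ler_sum => x xs;
  by rewrite -!mulrA -mulrDr; apply: ler_wpM2l; rewrite ?lam_ge0 // le_max lexx ?orbT.
Qed.

Lemma val2_kinked : exists c0 c1 k : R,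
  (forall x, val2 x (1 - x) = c0 + c1 * x + k * posp (x - kink)) /\
  (k != 0 -> A - B - C + D != 0).
Proof.
have diff x : A - B - C + D != 0 ->
    x * A + (1 - x) * B - (x * C + (1 - x) * D) = (A - B - C + D) * (x - kink).
  by move=> hd; rewrite /kink; field.
case: (ltgtP (A - B - C + D) 0) => hd.
- exists B, (A - B), (- (A - B - C + D)); split => [x|//].
  rewrite /val2 maxC max_posp.
  have -> : x * C + (1 - x) * D - (x * A + (1 - x) * B) = - (A - B - C + D) * (x - kink).
    by rewrite mulNr -diff ?lt_eqF //; ring.
  by rewrite posp_scale ?oppr_ge0 ?ltW //; ring.
- exists D, (C - D), (A - B - C + D); split => [x|//].
  by rewrite /val2 max_posp diff ?gt_eqF // posp_scale ?ltW //; ring.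
- exists (D + posp (B - D)), (C - D), 0; split; last by rewrite eqxx.
  move=> x; rewrite /val2 max_posp mul0r addr0.
  have -> : x * A + (1 - x) * B - (x * C + (1 - x) * D) = (A - B - C + D) * x + (B - D).
    by ring.
  by rewrite hd mul0r add0r; ring.
Qed.

Lemma sum_val2 (S : seq R) : exists c0 c1 k : R,
  (forall mu, \sum_(x <- S) mu x * val2 x (1 - x) =
     c0 * \sum_(x <- S) mu x + c1 * \sum_(x <- S) mu x * x + k * call S mu kink) /\
  (k != 0 -> A - B - C + D != 0).
Proof.
have [c0 [c1 [k [val2E k_neq0]]]] := val2_kinked; exists c0, c1, k; split => // mu.
rewrite /call !mulr_sumr -!big_split /=; apply: eq_bigr => x _; rewrite val2E; ring.
Qed.

End TwoActions.

(* The universal coupling of experiments P_1, ..., P_m with two states. *)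
Section Posteriors.
Variable R : realType.
Variables (m : nat) (Hm : (0 < m)%N) (Y : 'I_m -> finType).
Variable P : forall j : 'I_m, bool -> Y j -> R.
Arguments P : clear implicits.
Hypothesis HP : forall j, experiment (P j).
(* Extra points to be included in the grid: the kinks of the decision problems of interest. *)
Variable ks : seq R.

Definition kink_listed (A B C D : R) : Prop :=
  A - B - C + D != 0 -> 0 <= kink A B C D <= 1 -> kink A B C D \in ks.

Definition weight j (y : Y j) : R := P j true y + P j false y.
Definition posterior j (y : Y j) : R := P j true y / weight y.
Definition belief (th : bool) (x : R) : R := if th then x else 1 - x.

Lemma P_ge0 j th (y : Y j) : 0 <= P j th y.
Proof. by case: (HP j th) => P_ge0 _; apply: P_ge0. Qed.

Lemma P_sum j th : \sum_y P j th y = 1.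
Proof. by case: (HP j th). Qed.

Lemma weight_ge0 j (y : Y j) : 0 <= weight y.
Proof. by rewrite addr_ge0 ?P_ge0. Qed.

Lemma P_posterior j th (y : Y j) : P j th y = weight y * belief th (posterior y).
Proof.
have := P_ge0 true y; have := P_ge0 false y; rewrite /posterior /belief /weight => h0 h1.
have [w0|w_neq0] := eqVneq (P j true y + P j false y) 0.
  by rewrite w0 mul0r; case: th; lra.
by case: th; rewrite /= mulrC ?mulrBl ?mul1r divfK //; ring.
Qed.

Lemma posterior01 j (y : Y j) : 0 <= posterior y <= 1.
Proof.
have := P_ge0 true y; have := P_ge0 false y; rewrite /posterior /weight => h0 h1.
have [w0|w_neq0] := eqVneq (P j true y + P j false y) 0; first by rewrite w0 invr0 mulr0 lexx ler01.
have w_gt0 : 0 < P j true y + P j false y by rewrite lt_neqAle eq_sym w_neq0 addr_ge0.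
by rewrite divr_ge0 ?addr_ge0 //= ler_pdivrMr // mul1r; lra.
Qed.

Definition grid : seq R := undup (0 :: 1 :: [seq c <- ks | 0 <= c <= 1] ++
  [seq posterior y | j <- enum 'I_m, y <- enum (Y j)]).

Lemma grid_uniq : uniq grid. Proof. exact: undup_uniq. Qed.

Lemma grid01 x : x \in grid -> 0 <= x <= 1.
Proof.
rewrite mem_undup !inE => /orP[/eqP->|/orP[/eqP->|]]; rewrite ?lexx ?ler01 //.
rewrite mem_cat => /orP[|/allpairsPdep[j [y [_ _ ->]]]]; last exact: posterior01.
by rewrite mem_filter => /andP[].
Qed.

Lemma posterior_grid j (y : Y j) : posterior y \in grid.
Proof.
rewrite mem_undup !inE mem_cat.
by rewrite (allpairs_f_dep posterior (x:=j) (y:=y)) ?mem_enum ?orbT.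
Qed.

Lemma ks_grid c : c \in ks -> 0 <= c <= 1 -> c \in grid.
Proof. by move=> cks c01; rewrite mem_undup !inE mem_cat mem_filter c01 cks !orbT. Qed.

Definition nu j x : R := \sum_(y : Y j | posterior y == x) weight y.

Lemma sum_nu j (f : R -> R) :
  \sum_(x <- grid) nu j x * f x = \sum_(y : Y j) weight y * f (posterior y).
Proof.
under eq_bigr do rewrite /nu big_distrl big_mkcond /=.
rewrite exchange_big /=; apply: eq_bigr => y _.
rewrite -(sum_dirac grid_uniq (fun x => weight y * f x) (posterior_grid y)).
by apply: eq_bigr => x _; rewrite /dirac eq_sym; case: (_ == _); rewrite ?mul1r ?mul0r.
Qed.

Lemma nu_ge0 j x : 0 <= nu j x.
Proof. by apply: sumr_ge0 => y _; apply: weight_ge0. Qed.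

Lemma nu_mass j : \sum_(x <- grid) nu j x = 2.
Proof.
under eq_bigr do rewrite -[nu j _]mulr1; rewrite sum_nu.
by under eq_bigr do rewrite mulr1; rewrite big_split /= !P_sum.
Qed.

Lemma nu_mean j : \sum_(x <- grid) nu j x * x = 1.
Proof. by rewrite sum_nu -(P_sum j true); apply: eq_bigr => y _; rewrite (P_posterior true). Qed.

Lemma call_nu0 j : call grid (nu j) 0 = 1.
Proof.
rewrite /call sum_nu -(P_sum j true); apply: eq_bigr => y _.
by rewrite subr0 posp_id ?(P_posterior true) //; case/andP: (posterior01 y).
Qed.

Lemma call_nu1 j : call grid (nu j) 1 = 0.
Proof.
rewrite /call sum_nu big1 // => y _; rewrite posp_eq0 ?mulr0 //.
by case/andP: (posterior01 y) => _; rewrite subr_le0.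
Qed.

Definition j0 : 'I_m := Ordinal Hm.
Definition envelope c : R := call grid (nu [arg max_(j > j0) call grid (nu j) c]%O) c.

Lemma envelope_ge j c : call grid (nu j) c <= envelope c.
Proof. by rewrite /envelope; case: arg_maxP => // i _; apply. Qed.

Lemma envelope_convex : grid_convex grid envelope.
Proof.
move=> a r b _ _ _ ar rb; rewrite {1}/envelope; set j := [arg max_(j > j0) _]%O.
apply: le_trans (call_convex (fun x _ => nu_ge0 _ x) ar rb) _.
by apply: lerD; apply: ler_wpM2l; rewrite ?envelope_ge // subr_ge0 ltW.
Qed.

Lemma envelope0 : envelope 0 = 1. Proof. exact: call_nu0. Qed.
Lemma envelope1 : envelope 1 = 0. Proof. exact: call_nu1. Qed.

Lemma nu_below_pinned j : below_pinned grid envelope (nu j).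
Proof.
split.
- by move=> x _; apply: nu_ge0.
- by move=> r _; apply: envelope_ge.
- exists 0; first by rewrite mem_undup mem_head.
  by split=> [x /grid01/andP[]//|]; rewrite call_nu0 envelope0.
- exists 1; first by rewrite mem_undup !inE eqxx orbT.
  by split=> [x /grid01/andP[]//|]; rewrite call_nu1 envelope1.
Qed.

Lemma spreads_exist : exists K : 'I_m -> R -> R -> R, forall j,
  mkernel grid (K j) /\ {in grid, forall r, call grid (kpush grid (nu j) (K j)) r = envelope r}.
Proof.
have [K HK] := boolp.choice (fun j => balayage grid_uniq envelope_convex (nu_below_pinned j)).
by exists K.
Qed.

Section CommonSpread.
Variable K : 'I_m -> R -> R -> R.
Hypothesis K_spread : forall j,
  mkernel grid (K j) /\ {in grid, forall r, call grid (kpush grid (nu j) (K j)) r = envelope r}.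

(* The spread of the first experiment; by uniqueness, it is the spread of every experiment. *)
Definition mustar : R -> R := kpush grid (nu j0) (K j0).

Lemma spread_mustar j : {in grid, kpush grid (nu j) (K j) =1 mustar}.
Proof.
have [Kj_mk Kj_call] := K_spread j; have [K0_mk K0_call] := K_spread j0.
apply: (call_inj grid_uniq); first by rewrite /mustar !kpush_mass // !nu_mass.
by move=> r rS; rewrite Kj_call // K0_call.
Qed.

Lemma mustar_ge0 x : x \in grid -> 0 <= mustar x.
Proof.
have [[K_ge0 _ _] _] := K_spread j0.
exact: (kpush_ge0 (fun y _ => nu_ge0 j0 y) K_ge0).
Qed.

Lemma mustar_mass : \sum_(x <- grid) mustar x = 2.
Proof. by rewrite kpush_mass ?nu_mass //; case: (K_spread j0). Qed.

Lemma mustar_mean : \sum_(x <- grid) mustar x * x = 1.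
Proof. by rewrite kpush_mean ?nu_mean //; case: (K_spread j0). Qed.

(* On the grid, the call function of mustar is the envelope. *)
Lemma call_mustar c : c \in grid -> exists j, call grid mustar c = call grid (nu j) c.
Proof. by move=> cS; have [_ ->] := K_spread j0; [eexists|]. Qed.

(* Bayes inversion of the kernel K j: the probability of signal z of experiment j
   given that the common posterior is x. *)
Definition inverse j x (z : Y j) : R := K j (posterior z) x * weight z / mustar x.

Lemma sum_weight_K j x : x \in grid -> \sum_(z : Y j) K j (posterior z) x * weight z = mustar x.
Proof.
move=> xS; rewrite -(spread_mustar j xS) /kpush sum_nu.
by apply: eq_bigr => z _; rewrite mulrC.
Qed.

Lemma spread_ge0 j x x' : x \in grid -> x' \in grid -> 0 <= K j x x'.
Proof. by have [[K_ge0 _ _] _] := K_spread j; apply: K_ge0. Qed.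

Lemma weight_K_le j x (z : Y j) : x \in grid -> K j (posterior z) x * weight z <= mustar x.
Proof.
move=> xS; rewrite -(sum_weight_K j xS) (bigD1 z) //= lerDl.
by apply: sumr_ge0 => z' _; rewrite mulr_ge0 ?weight_ge0 ?spread_ge0 ?posterior_grid.
Qed.

Lemma inverse_ge0 j x (z : Y j) : x \in grid -> 0 <= inverse x z.
Proof. by move=> xS; rewrite divr_ge0 ?mustar_ge0 ?mulr_ge0 ?weight_ge0 ?spread_ge0 ?posterior_grid. Qed.

Lemma inverse_sum j x : x \in grid -> mustar x != 0 -> \sum_(z : Y j) inverse x z = 1.
Proof. by move=> xS x_neq0; rewrite -mulr_suml sum_weight_K // mulfV. Qed.

Lemma prod_inverse_sum x : x \in grid -> mustar x != 0 ->
  \sum_(y : signals Y) \prod_j inverse x (y j) = 1.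
Proof.
move=> xS x_neq0; rewrite (sum_dffun_prod (fun j (z : Y j) => inverse x z)).
by apply: big1 => j _; apply: inverse_sum.
Qed.

(* The coupling: draw the posterior x from mustar and the state from x, then the
   signals independently from the Bayes inverses. *)
Definition coupled th (y : signals Y) : R :=
  \sum_(x <- grid) mustar x * belief th x * \prod_j inverse x (y j).

Lemma belief_ge0 th x : x \in grid -> 0 <= belief th x.
Proof. by move/grid01/andP => [x0 x1]; case: th => /=; lra. Qed.

Lemma coupled_ge0 th y : 0 <= coupled th y.
Proof.
rewrite /coupled big_seq; apply: sumr_ge0 => x xS.
by rewrite !mulr_ge0 ?mustar_ge0 ?belief_ge0 // prodr_ge0 // => j _; apply: inverse_ge0.
Qed.

Lemma sum_coupled (f : R -> R) :
  \sum_(y : signals Y) \sum_(x <- grid) mustar x * f x * \prod_j inverse x (y j) =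
  \sum_(x <- grid) mustar x * f x.
Proof.
rewrite exchange_big /= big_seq [RHS]big_seq; apply: eq_bigr => x xS.
have [->|x_neq0] := eqVneq (mustar x) 0; first by rewrite big1 ?mul0r // => y _; rewrite !mul0r.
by rewrite -mulr_sumr prod_inverse_sum ?mulr1.
Qed.

Lemma coupled_sum th : \sum_y coupled th y = 1.
Proof.
rewrite sum_coupled; case: th => /=; first exact: mustar_mean.
by under eq_bigr do rewrite mulrBr mulr1; rewrite sumrB mustar_mass mustar_mean; lra.
Qed.

Lemma coupled_marginal th j (yj : Y j) :
  \sum_(y : signals Y | y j == yj) coupled th y = P j th yj.
Proof.
rewrite /coupled exchange_big /=.
transitivity (\sum_(x <- grid) belief th x * (K j (posterior yj) x * weight yj)).
  rewrite big_seq [RHS]big_seq; apply: eq_bigr => x xS.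
  rewrite -mulr_sumr (sum_dffun_prod_fix (fun i (z : Y i) => inverse x z) yj).
  have [x0|x_neq0] := eqVneq (mustar x) 0.
    have := weight_K_le yj xS; rewrite x0 => le0.
    have ge0 : 0 <= K j (posterior yj) x * weight yj.
      by rewrite mulr_ge0 ?weight_ge0 ?spread_ge0 ?posterior_grid.
    by rewrite !mul0r [_ * weight yj](_ : _ = 0) ?mulr0 //; lra.
  rewrite big1 => [|i _]; last exact: inverse_sum.
  by rewrite mulr1 /inverse; field.
transitivity (weight yj * \sum_(x <- grid) K j (posterior yj) x * belief th x).
  by rewrite mulr_sumr; apply: eq_bigr => x _; ring.
rewrite (P_posterior th yj); congr (_ * _); case: th => /=.
  by have [_ _ K_mean] := (K_spread j).1; rewrite K_mean ?posterior_grid.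
have [_ K_row K_mean] := (K_spread j).1.
by under eq_bigr do rewrite mulrBr mulr1; rewrite sumrB K_row ?K_mean ?posterior_grid.
Qed.

Lemma coupled_coupling : coupling P coupled.
Proof.
split=> [th|]; last exact: coupled_marginal.
by split=> [y|]; [apply: coupled_ge0|apply: coupled_sum].
Qed.

(* The coupled signals are a garbling of the common posterior. *)
Lemma coupled_val2 A B C D :
  \sum_(y : signals Y) val2 A B C D (coupled true y) (coupled false y) <=
  \sum_(x <- grid) mustar x * val2 A B C D x (1 - x).
Proof.
rewrite -sum_coupled; apply: ler_sum => y _.
have coupledE th : coupled th y = \sum_(x <- grid) \prod_j inverse x (y j) * (mustar x * belief th x).
  by apply: eq_bigr => x _; rewrite mulrC.
rewrite !coupledE; apply: le_trans (val2_sum A B C D (fun x => mustar x * belief true x)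
  (fun x => mustar x * belief false x) _) _.
  by move=> x xS; rewrite prodr_ge0 // => j _; apply: inverse_ge0.
rewrite big_seq [leRHS]big_seq; apply: ler_sum => x xS.
by rewrite /belief val2_hom ?mustar_ge0 // mulrC.
Qed.

Lemma mustar_val2 A B C D : kink_listed A B C D -> exists j,
  \sum_(x <- grid) mustar x * val2 A B C D x (1 - x) =
  \sum_(x <- grid) nu j x * val2 A B C D x (1 - x).
Proof.
move=> listed; have [c0 [c1 [k [val2E k_neq0]]]] := sum_val2 A B C D grid.
suff [j call_j] : exists j, k * call grid mustar (kink A B C D) = k * call grid (nu j) (kink A B C D).
  by exists j; rewrite !val2E call_j mustar_mass mustar_mean nu_mass nu_mean.
have [->|/k_neq0 d_neq0] := eqVneq k 0; first by exists j0; rewrite !mul0r.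
have [c_lt0|c_ge0] := ltP (kink A B C D) 0.
  have c_le : {in grid, forall x, kink A B C D <= x} by move=> x /grid01/andP[x0 _]; lra.
  by exists j0; rewrite !call_below // mustar_mass mustar_mean nu_mass nu_mean.
have [c_gt1|c_le1] := ltP 1 (kink A B C D).
  have le_c : {in grid, forall x, x <= kink A B C D} by move=> x /grid01/andP[_ x1]; lra.
  by exists j0; rewrite !call_above.
have c01 : 0 <= kink A B C D <= 1 by rewrite c_ge0 c_le1.
by have [j ->] := call_mustar (ks_grid (listed d_neq0 c01) c01); exists j.
Qed.

End CommonSpread.

Lemma experiment_val2 j A B C D :
  \sum_(z : Y j) val2 A B C D (P j true z) (P j false z) =
  \sum_(x <- grid) nu j x * val2 A B C D x (1 - x).
Proof.
rewrite sum_nu; apply: eq_bigr => z _.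
by rewrite (P_posterior true z) (P_posterior false z) val2_hom ?weight_ge0.
Qed.

Theorem universal_coupling : exists Q, coupling P Q /\
  forall A B C D, kink_listed A B C D -> exists j,
    \sum_(y : signals Y) val2 A B C D (Q true y) (Q false y) <=
    \sum_(z : Y j) val2 A B C D (P j true z) (P j false z).
Proof.
have [K K_spread] := spreads_exist.
exists (coupled K); split => [|A B C D listed]; first exact: coupled_coupling.
have [j val_j] := mustar_val2 K_spread listed; exists j.
by rewrite experiment_val2 -val_j; apply: coupled_val2.
Qed.

End Posteriors.

Section ComposedProblems.
Variable R : realType.
Variables (Ys : finType) (k : nat) (A : 'I_k -> finType).
Variable u : forall l : 'I_k, bool -> A l -> R.
Arguments u : clear implicits.

Lemma strategy_prod (sg : forall l, Ys -> A l -> R) :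
  (forall l, strategy (sg l)) -> strategy (prod_strategy sg).
Proof.
move=> sg_dist y; split=> [a|].
  by apply: prodr_ge0 => l _; case: (sg_dist l y) => sg_ge0 _; apply: sg_ge0.
rewrite /prod_strategy (sum_dffun_prod (fun l (z : A l) => sg l y z)).
by apply: big1 => l _; case: (sg_dist l y).
Qed.

Lemma mixed_util_prod th (sg : forall l, Ys -> A l -> R) y :
  (forall l, \sum_(z : A l) sg l y z = 1) ->
  mixed_util (comp_util u) th (prod_strategy sg y) = \sum_l mixed_util (u l) th (sg l y).
Proof.
move=> sg_sum; rewrite /mixed_util /comp_util /prod_strategy.
under eq_bigr do rewrite mulr_sumr.
rewrite exchange_big /=; apply: eq_bigr => l _.
pose F l' (z : A l') := sg l' y z * (if l' == l then u l' th z else 1).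
transitivity (\sum_(a : comp_actions A) \prod_l' F l' (a l')).
  apply: eq_bigr => a _; rewrite /F big_split /=; congr (_ * _).
  by rewrite (bigD1 l) //= eqxx big1 ?mulr1 // => l' /negbTE ->.
rewrite (sum_dffun_prod F) (bigD1 l) //= [X in _ * X]big1 ?mulr1.
  by apply: eq_bigr => z _; rewrite /F eqxx.
by move=> l' /negbTE l'_neq; rewrite /F; under eq_bigr do rewrite l'_neq mulr1.
Qed.

Lemma payoff_prod Q (sg : forall l, Ys -> A l -> R) : (forall l, strategy (sg l)) ->
  payoff Q (comp_util u) (prod_strategy sg) = \sum_l payoff Q (u l) (sg l).
Proof.
move=> sg_dist; rewrite /payoff.
have sg_sum y l : \sum_(z : A l) sg l y z = 1 by case: (sg_dist l y).
under eq_bigr do under eq_bigr do rewrite (mixed_util_prod _ (sg_sum _)) mulr_sumr.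
rewrite exchange_big /=; under eq_bigr do rewrite exchange_big /=.
by rewrite exchange_big /=; apply: eq_bigr => l _; apply: exchange_big.
Qed.

Lemma payoff_comp_le (a0 : forall l, A l) Q (sg : Ys -> comp_actions A -> R) : strategy sg ->
  payoff Q (comp_util u) sg <= \sum_l bayes_value (a0 l) (u l) Q.
Proof.
move=> sg_dist; rewrite payoffE /bayes_value [leRHS]exchange_big /=; apply: ler_sum => y _.
have [sg_ge0 sg_sum] := sg_dist y.
rewrite -[leRHS]mul1r -sg_sum mulr_suml; apply: ler_sum => a _; apply: ler_wpM2l => //.
rewrite {1}/joint_util /comp_util /=; under eq_bigr do rewrite mulr_sumr.
by rewrite exchange_big /=; apply: ler_sum => l _; apply: (maxf_ge (a0 l) (joint_util (u l) Q y)).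
Qed.

End ComposedProblems.

Section TwoActionComposition.
Variable R : realType.
Variables (m : nat) (Hm : (0 < m)%N) (Y : 'I_m -> finType).
Variable P : forall j : 'I_m, bool -> Y j -> R.
Arguments P : clear implicits.
Hypothesis HP : forall j, experiment (P j).
Variables (k : nat) (A : 'I_k -> finType).
Hypothesis HA : forall l, #|A l| = 2%N.
Variable u : forall l : 'I_k, bool -> A l -> R.
Arguments u : clear implicits.

(* A default action of each component (used to break ties in best responses). *)
Definition a0 l : A l := enum_val (cast_ord (esym (HA l)) ord0).

Lemma two_actions l : exists a b : A l, forall z, z = a \/ z = b.
Proof.
have := HA l; rewrite cardE; case E: (enum (A l)) => [|a [|b [|c s]]] //= _.
exists a, b => z; have : z \in enum (A l) by rewrite mem_enum.
by rewrite E !inE => /orP[/eqP|/eqP]; [left|right].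
Qed.

Lemma bayes_value2 l a b (Ys : finType) (Q : bool -> Ys -> R) : (forall z : A l, z = a \/ z = b) ->
  bayes_value (a0 l) (u l) Q =
  \sum_(y : Ys) val2 (u l true a) (u l false a) (u l true b) (u l false b) (Q true y) (Q false y).
Proof.
move=> ab; apply: eq_bigr => y _.
have utilE z : joint_util (u l) Q y z = Q true y * u l true z + Q false y * u l false z.
  by rewrite /joint_util big_bool.
rewrite /val2 -!utilE; apply/eqP; rewrite eq_le ge_max !maxf_ge andbT /maxf.
by case: (ab [arg max_(a > a0 l) joint_util (u l) Q y a]%O) => ->; rewrite le_max lexx ?orbT.
Qed.

Definition kinks : seq R :=
  [seq kink (u l true z.1) (u l false z.1) (u l true z.2) (u l false z.2)
  | l <- enum 'I_k, z <- enum {: A l * A l}].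

Lemma kinks_listed l (a b : A l) :
  kink_listed kinks (u l true a) (u l false a) (u l true b) (u l false b).
Proof.
move=> _ _; apply: (allpairs_f_dep
  (fun l (z : A l * A l) => kink (u l true z.1) (u l false z.1) (u l true z.2) (u l false z.2))
  (x := l) (y := (a, b))); by rewrite mem_enum.
Qed.

Lemma coupling_bound : exists Q, coupling P Q /\
  forall l, exists j, bayes_value (a0 l) (u l) Q <= bayes_value (a0 l) (u l) (P j).
Proof.
have [Q [Q_coup Q_val]] := universal_coupling Hm HP kinks.
exists Q; split => // l; have [a [b ab]] := two_actions l.
have [j le_j] := Q_val _ _ _ _ (@kinks_listed l a b).
by exists j; rewrite !(bayes_value2 _ ab).
Qed.

Definition best_exp l : 'I_m := [arg max_(j > j0 Hm) bayes_value (a0 l) (u l) (P j)]%O.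
Definition comp_value l : R := bayes_value (a0 l) (u l) (P (best_exp l)).

Lemma comp_value_ge l j : bayes_value (a0 l) (u l) (P j) <= comp_value l.
Proof. by rewrite /comp_value /best_exp; case: arg_maxP => // i _; apply. Qed.

Lemma sup_V1 l : sup [set x | exists j : 'I_m, x = V1 (P j) (u l)] = comp_value l.
Proof.
apply: sup_max; first by exists (best_exp l); rewrite (V1_bayes (a0 l)).
by move=> x [j ->]; rewrite (V1_bayes (a0 l)) comp_value_ge.
Qed.

(* Best responding to the best single experiment guarantees comp_value against every coupling. *)
Lemma component_guarantee l : exists sg, strategy sg /\ worst P (u l) sg = comp_value l.
Proof.
pose tau := pure R (best_response (a0 l) (u l) (P (best_exp l))).
exists (fun y : signals Y => tau (y (best_exp l))); split; first by move=> y; apply: strategy_pure.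
rewrite worst_lift ?bayes_attained //.
by have [Q [Q_coup _]] := coupling_bound; exists Q.
Qed.

Lemma worst_prod (sg : forall l, signals Y -> A l -> R) : (forall l, strategy (sg l)) ->
  \sum_l worst P (u l) (sg l) <= worst P (comp_util u) (prod_strategy sg).
Proof.
move=> sg_dist; have [Q [Q_coup _]] := coupling_bound.
apply: lb_le_inf; first by exists (payoff Q (comp_util u) (prod_strategy sg)); exists Q.
move=> x [Q' [Q'_coup ->]]; rewrite payoff_prod //.
by apply: ler_sum => l _; apply: worst_le.
Qed.

(* Conversely, against the universal coupling no strategy gets more. *)
Lemma worst_comp_le (sg : signals Y -> comp_actions A -> R) : strategy sg ->
  worst P (comp_util u) sg <= \sum_l comp_value l.
Proof.
move=> sg_dist; have [Q [Q_coup Q_val]] := coupling_bound.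
apply: le_trans (worst_le (comp_util u) Q_coup sg_dist) _.
apply: le_trans (payoff_comp_le u a0 Q sg_dist) _.
by apply: ler_sum => l _; have [j le_j] := Q_val l; apply: le_trans le_j (comp_value_ge l j).
Qed.

End TwoActionComposition.

Local Open Scope classical_set_scope.

Theorem lemma4 (R : realType) (m : nat) (Hm : (0 < m)%N)
  (Y : 'I_m -> finType) (P : forall j : 'I_m, bool -> Y j -> R)
  (HP : forall j, experiment (P j))
  (k : nat) (A : 'I_k -> finType) (HA : forall l, #|A l| = 2%N)
  (u : forall l : 'I_k, bool -> A l -> R) :
  Vrob P (comp_util u) = \sum_(l < k) sup [set x | exists j : 'I_m, x = V1 (P j) (u l)]
  /\
  forall sg : forall l : 'I_k, signals Y -> A l -> R,
    (forall l, robustly_optimal P (u l) (sg l)) ->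
    robustly_optimal P (comp_util u) (prod_strategy sg).
Proof.
pose opt l := proj1_sig (cid (component_guarantee Hm HP HA u l)).
have [opt_dist opt_val] : (forall l, strategy (opt l)) /\
    forall l, worst P (u l) (opt l) = comp_value Hm P HA u l.
  by split => l; case: (proj2_sig (cid (component_guarantee Hm HP HA u l))).
have opt_prod : worst P (comp_util u) (prod_strategy opt) = \sum_l comp_value Hm P HA u l.
  apply: le_anti; rewrite (worst_comp_le Hm HP HA u (strategy_prod opt_dist)) /=.
  by rewrite -(eq_bigr _ (fun l _ => opt_val l)); apply: worst_prod.
split.
  transitivity (\sum_l comp_value Hm P HA u l); last by apply: eq_bigr => l _; rewrite sup_V1.
  apply: sup_max.
    by exists (prod_strategy opt); rewrite opt_prod; split => //; apply: strategy_prod.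
  by move=> x [sg [sg_dist ->]]; apply: worst_comp_le.
move=> sg sg_opt; have sg_dist l : strategy (sg l) by case: (sg_opt l).
split; first exact: strategy_prod.
move=> sg' sg'_dist; apply: le_trans (worst_comp_le Hm HP HA u sg'_dist) _.
apply: le_trans (worst_prod Hm HP HA u sg_dist); apply: ler_sum => l _.
by rewrite -opt_val; case: (sg_opt l) => _; apply.
Qed.
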